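(* Let $\mathcal{T}$ be a tangle of order $k$ in a connectivity system $(E,\lambda)$. Let $n\geq 4$, and let $\Phi=(P_1,\ldots,P_n)$ be a $\mathcal{T}$-strong partition of $E$. If $P_i\cup P_{i+1}$ is $k$-separating for each $i\in \{1,\dots,n-1\}$, then $\Phi$ is a $k$-flower in $\mathcal{T}$.
   Context: A connectivity system is a pair $(E,\lambda)$ with $E$ finite and $\lambda$ an integer-valued symmetric ($\lambda(X)=\lambda(E-X)$) submodular function on subsets of $E$. $X$ is $k$-separating if $\lambda(X)\le k$. A tangle of order $k$ is a collection $\mathcal T$ of subsets of $E$ with (T1) $\lambda(A)<k$ for $A\in\mathcal T$; (T2) if $\lambda(A)\le k-1$ then $A\in\mathcal T$ or $E-A\in\mathcal T$; (T3) $A\cup B\cup C\ne E$ for $A,B,C\in\mathcal T$; (T4) $E-\{e\}\notin\mathcal T$ for $e\in E$. A set is $\mathcal T$-weak if contained in a member of $\mathcal T$, and $\mathcal T$-strong otherwise; a partition is $\mathcal T$-strong if all its parts are. A $k$-flower in $\mathcal T$ is a $\mathcal T$-strong partition $(P_1,\dots,P_n)$ of $E$ such that for every $i$, both $P_i$ and $P_i\cup P_{i+1}$ are $k$-separating, subscripts taken modulo $n$. *)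

From mathcomp Require Import all_boot all_order all_algebra.
Set Implicit Arguments. Unset Strict Implicit. Unset Printing Implicit Defensive.
Import Order.TTheory GRing.Theory Num.Theory.
Local Open Scope ring_scope.

Definition symmetric_fn (E : finType) (lam : {set E} -> int) : Prop :=
  forall X : {set E}, lam X = lam (~: X).

Definition submodular_fn (E : finType) (lam : {set E} -> int) : Prop :=
  forall X Y : {set E}, lam (X :|: Y) + lam (X :&: Y) <= lam X + lam Y.

Definition connectivity_system (E : finType) (lam : {set E} -> int) : Prop :=
  symmetric_fn lam /\ submodular_fn lam.

Definition k_separating (E : finType) (lam : {set E} -> int) (k : int)
  (X : {set E}) : Prop := lam X <= k.

Definition is_tangle (E : finType) (lam : {set E} -> int) (k : int)
  (T : {set {set E}}) : Prop :=
  [/\ (forall A, A \in T -> lam A < k),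
      (forall A, lam A <= k - 1 -> A \in T \/ ~: A \in T),
      (forall A B C, A \in T -> B \in T -> C \in T -> A :|: B :|: C != setT)
    & (forall e : E, ~: [set e] \notin T)].

Definition T_weak (E : finType) (T : {set {set E}}) (X : {set E}) : Prop :=
  exists2 A, A \in T & X \subset A.

Definition T_strong (E : finType) (T : {set {set E}}) (X : {set E}) : Prop :=
  ~ T_weak T X.

Definition is_partition (E : finType) (n : nat) (P : 'I_n -> {set E}) : Prop :=
  (forall i j : 'I_n, i != j -> [disjoint P i & P j]) /\
  \bigcup_(i < n) P i = setT.

Definition T_strong_partition (E : finType) (T : {set {set E}}) (n : nat)
  (P : 'I_n -> {set E}) : Prop :=
  is_partition P /\ forall i, T_strong T (P i).

(* k-flower in T; subscripts mod n via ordS (i.+1 mod n). *)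
Definition k_flower (E : finType) (lam : {set E} -> int) (k : int)
  (T : {set {set E}}) (n : nat) (P : 'I_n -> {set E}) : Prop :=
  T_strong_partition T P /\
  forall i : 'I_n, k_separating lam k (P i) /\
                   k_separating lam k (P i :|: P (ordS i)).

From mathcomp Require Import all_boot all_order all_algebra.
From mathcomp Require Import zify.
Import Order.TTheory GRing.Theory Num.Theory.

Set Implicit Arguments.
Unset Strict Implicit.
Unset Printing Implicit Defensive.

Local Open Scope ring_scope.

(* Every union of blocks containing a block and missing another has
   connectivity at least k, since otherwise it or its complement would be in
   the tangle and the block it contains would be weak.  Submodularity then
   propagates k-separation: two k-separating sets whose intersection (or union)
   is of this kind have a k-separating union (resp. intersection).  This makes
   every run P_a u ... u P_b with a < b k-separating, each inner P_j the
   intersection of two consecutive pairs, and the sets P_0, P_(n-1) and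
   P_(n-1) u P_0 complements of runs; n >= 4 keeps those runs nontrivial. *)

Section Connectivity.

Variables (E : finType) (lam : {set E} -> int) (k : int).

Lemma submodular_union_le (X Y : {set E}) :
  submodular_fn lam -> lam X <= k -> lam Y <= k -> k <= lam (X :&: Y) ->
  lam (X :|: Y) <= k.
Proof. by move=> /(_ X Y); lia. Qed.

Lemma submodular_inter_le (X Y : {set E}) :
  submodular_fn lam -> lam X <= k -> lam Y <= k -> k <= lam (X :|: Y) ->
  lam (X :&: Y) <= k.
Proof. by move=> /(_ X Y); lia. Qed.

Lemma tangle_separation_lb (T : {set {set E}}) (A B X : {set E}) :
  is_tangle lam k T -> T_strong T A -> T_strong T B ->
  A \subset X -> B \subset ~: X -> k <= lam X.
Proof.
case=> _ tangle_dichotomy _ _ strongA strongB AX BXc.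
rewrite leNgt; apply/negP => lt_lam_k.
have [XT | XcT] := tangle_dichotomy X ltac:(lia).
- by apply: strongA; exists X.
- by apply: strongB; exists (~: X).
Qed.

End Connectivity.

Section PartitionBlocks.

Variables (E : finType) (n : nat) (P : 'I_n -> {set E}).

Definition blocks (c : pred nat) : {set E} := \bigcup_(i < n | c i) P i.

Definition segment (a b : nat) : pred nat := fun i => (a <= i <= b)%N.

Lemma eq_blocks (c d : pred nat) :
  (forall i : 'I_n, c i = d i) -> blocks c = blocks d.
Proof. by move=> cd; apply: eq_bigl. Qed.

Hypothesis partP : is_partition P.

Lemma block_of (x : E) : exists j : 'I_n, x \in P j.
Proof.
have : x \in \bigcup_(i < n) P i by rewrite partP.2 inE.
by case/bigcupP => j _ xj; exists j.
Qed.

Lemma mem_block (x : E) (i j : 'I_n) : x \in P j -> (x \in P i) = (i == j).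
Proof.
move=> xj; have [-> // | ij] := eqVneq i j.
apply/negbTE/negP => xi; have := partP.1 _ _ ij.
by rewrite disjoint_subset => /subsetP/(_ x xi); rewrite inE xj.
Qed.

Lemma mem_blocks (c : pred nat) (x : E) (j : 'I_n) :
  x \in P j -> (x \in blocks c) = c j.
Proof.
move=> xj; apply/bigcupP/idP => [[i ci xi] | cj]; last by exists j.
by rewrite (mem_block i xj) in xi; rewrite (eqP xi) in ci.
Qed.

Lemma blocks_ext (d : pred nat) (X : {set E}) :
  (forall (x : E) (j : 'I_n), x \in P j -> (x \in X) = d j) ->
  X = blocks d.
Proof.
move=> memX; apply/setP => x; have [j xj] := block_of x.
by rewrite (memX _ _ xj) (mem_blocks _ xj).
Qed.

Lemma blocks1 (i : 'I_n) : P i = blocks (pred1 (i : nat)).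
Proof. by apply: blocks_ext => x j xj; rewrite (mem_block i xj) eq_sym. Qed.

Lemma blocksC (c : pred nat) : ~: blocks c = blocks (predC c).
Proof. by apply: blocks_ext => x j xj; rewrite inE (mem_blocks _ xj). Qed.

Lemma blocksU (c d : pred nat) :
  blocks c :|: blocks d = blocks [pred i | c i || d i].
Proof. by apply: blocks_ext => x j xj; rewrite !inE !(mem_blocks _ xj). Qed.

Lemma blocksI (c d : pred nat) :
  blocks c :&: blocks d = blocks [pred i | c i && d i].
Proof. by apply: blocks_ext => x j xj; rewrite !inE !(mem_blocks _ xj). Qed.

End PartitionBlocks.

Section Flower.

Variables (E : finType) (lam : {set E} -> int) (k : int).
Variables (T : {set {set E}}) (n : nat) (P : 'I_n -> {set E}).

Hypothesis lam_conn : connectivity_system lam.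
Hypothesis tangleT : is_tangle lam k T.
Hypothesis n_ge4 : (4 <= n)%N.
Hypothesis strongP : T_strong_partition T P.
Hypothesis pair_sep :
  forall i : 'I_n, (i.+1 < n)%N -> k_separating lam k (P i :|: P (ordS i)).

Let partP : is_partition P := strongP.1.

Lemma lam_blocksC (c : pred nat) : lam (blocks P c) = lam (blocks P (predC c)).
Proof. by rewrite lam_conn.1 blocksC. Qed.

Lemma lam_blocks_lb (c : pred nat) (a b : nat) :
  (a < n)%N -> (b < n)%N -> c a -> ~~ c b -> k <= lam (blocks P c).
Proof.
move=> an bn ca ncb.
apply: (tangle_separation_lb tangleT (strongP.2 (Ordinal an))
                             (strongP.2 (Ordinal bn))).
- by apply/subsetP => x xa; rewrite (mem_blocks partP _ xa).
- by apply/subsetP => x xb; rewrite blocksC // (mem_blocks partP _ xb).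
Qed.

Lemma pair_blocks_sep (b : nat) :
  (b.+1 < n)%N -> lam (blocks P (segment b b.+1)) <= k.
Proof.
move=> bn; have bn' : (b < n)%N by lia.
suff -> : blocks P (segment b b.+1) = P (Ordinal bn') :|: P (ordS (Ordinal bn')).
  exact: pair_sep.
rewrite !blocks1 // blocksU //; apply: eq_blocks => j /=.
by rewrite /segment modn_small //; lia.
Qed.

Lemma segment_blocks_sep (a b : nat) :
  (a < b)%N -> (b < n)%N -> lam (blocks P (segment a b)) <= k.
Proof.
elim: b => [|b IH] // ab bn.
have [-> | ab'] := eqVneq a b; first exact: pair_blocks_sep bn.
have -> : blocks P (segment a b.+1) =
           blocks P (segment a b) :|: blocks P (segment b b.+1).
  by rewrite blocksU //; apply: eq_blocks => i; rewrite /segment /=; lia.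
apply: submodular_union_le lam_conn.2 _ _ _.
- by apply: IH; lia.
- exact: pair_blocks_sep.
- rewrite blocksI //; apply: (lam_blocks_lb (a := b) (b := a));
    rewrite /= /segment; lia.
Qed.

Lemma block_sep (j : 'I_n) : lam (P j) <= k.
Proof.
have jn := ltn_ord j; rewrite blocks1 //.
have [j0 | jpos] := posnP j.
  rewrite lam_blocksC (eq_blocks P (d := segment 1 n.-1)).
    by apply: segment_blocks_sep; lia.
  by move=> i; rewrite /segment /= j0; have := ltn_ord i; lia.
have [jlast | jlt] := eqVneq (j : nat) n.-1.
  rewrite lam_blocksC (eq_blocks P (d := segment 0 n.-2)).
    by apply: segment_blocks_sep; lia.
  by move=> i; rewrite /segment /= jlast; have := ltn_ord i; lia.
have -> : blocks P (pred1 (j : nat)) =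
          blocks P (segment j.-1 j) :&: blocks P (segment j j.+1).
  by rewrite blocksI //; apply: eq_blocks => i; rewrite /segment /=; lia.
apply: submodular_inter_le lam_conn.2 _ _ _.
- by apply: segment_blocks_sep; lia.
- by apply: segment_blocks_sep; lia.
- rewrite blocksU //.
  (* as n >= 4, the blocks P_(j-1), P_j, P_(j+1) miss P_0 or P_(n-1) *)
  have [b bn b_out] : exists2 b, (b < n)%N & ~~ (j.-1 <= b <= j.+1)%N.
    by exists (if (2 <= j)%N then 0%N else n.-1); case: ifP; lia.
  by apply: (lam_blocks_lb (a := j) (b := b)); rewrite /segment /=; lia.
Qed.

Lemma wrap_pair_sep (i : 'I_n) :
  i.+1 = n -> lam (P i :|: P (ordS i)) <= k.
Proof.
move=> iS; have -> : P i :|: P (ordS i) = ~: blocks P (segment 1 n.-2).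
  rewrite !blocks1 // blocksU // blocksC //; apply: eq_blocks => j /=.
  by rewrite /segment iS modnn; have := ltn_ord j; lia.
by rewrite -lam_conn.1; apply: segment_blocks_sep; lia.
Qed.

End Flower.

Theorem lemma4p2 (E : finType) (lam : {set E} -> int) (k : int)
  (T : {set {set E}}) (n : nat) (P : 'I_n -> {set E}) :
  connectivity_system lam ->
  is_tangle lam k T ->
  (4 <= n)%N ->
  T_strong_partition T P ->
  (forall i : 'I_n, (i.+1 < n)%N -> k_separating lam k (P i :|: P (ordS i))) ->
  k_flower lam k T P.
Proof.
move=> conn tangle n_ge4 strongP pair_sep; split=> // i.
split; first exact: (block_sep conn tangle n_ge4 strongP pair_sep).
have [iS | iS] := ltnP i.+1 n; first exact: pair_sep.
have {iS} iS : i.+1 = n by apply/eqP; rewrite eqn_leq ltn_ord.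
exact: (wrap_pair_sep conn tangle n_ge4 strongP pair_sep).
Qed.
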